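(* Let $d,n\ge 2$, $0<\varepsilon<1/4$, and let $f$ be a stable update function. There exists $K>0$ such that for every configuration $\mathcal U^{(0)}$ of $n$ opinions in $\mathbb S^{d-1}$ that is $\varepsilon$-active, there exists a sequence of at most $K$ interventions after which the resulting configuration is $\varepsilon$-inactive.
   Context: Opinions are unit vectors in $\mathbb R^d$; a configuration is an $n$-tuple $(\vec u_1,\dots,\vec u_n)$ and $A_{ij}=\langle\vec u_i,\vec u_j\rangle$. An intervention $(i,j)$, $i\ne j$, replaces $\vec u_i$ by $\vec w/\|\vec w\|$ with $\vec w=\vec u_i+f(A_{ij})\vec u_j$, leaving others unchanged. $f:[-1,1]\to\mathbb R$ is stable if continuous and $\operatorname{sign}f(A)=\operatorname{sign}A$ for all $A$. For $0\le\varepsilon<1$, a configuration is $\varepsilon$-active if there exist $i,j$ with $\varepsilon<|A_{ij}|<1-\varepsilon$, and $\varepsilon$-inactive otherwise. *)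

From HB Require Import structures.
From mathcomp Require Import all_boot all_order all_algebra.
From mathcomp Require Import all_classical all_reals all_analysis.
Set Implicit Arguments. Unset Strict Implicit. Unset Printing Implicit Defensive.
Import Order.TTheory GRing.Theory Num.Theory.
Import numFieldNormedType.Exports.
Local Open Scope classical_set_scope.
Local Open Scope ring_scope.

Definition config (R : realType) (n d : nat) := 'I_n -> 'rV[R]_d.

Definition dotp (R : realType) (d : nat) (u v : 'rV[R]_d) : R :=
  \sum_(k < d) u 0 k * v 0 k.

Definition vnorm (R : realType) (d : nat) (u : 'rV[R]_d) : R :=
  Num.sqrt (dotp u u).

Definition is_unit_vec (R : realType) (d : nat) (u : 'rV[R]_d) : Prop :=
  vnorm u = 1.

Definition unit_config (R : realType) (n d : nat) (U : config R n d) : Prop :=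
  forall i, is_unit_vec (U i).

Definition gram (R : realType) (n d : nat) (U : config R n d) (i j : 'I_n) : R :=
  dotp (U i) (U j).

Definition stable (R : realType) (f : R -> R) : Prop :=
  {within `[-1, 1], continuous f} /\
  (forall A : R, -1 <= A <= 1 -> Num.sg (f A) = Num.sg A).

Definition intervene (R : realType) (n d : nat) (f : R -> R)
    (U : config R n d) (ij : 'I_n * 'I_n) : config R n d :=
  let w := U ij.1 + f (gram U ij.1 ij.2) *: U ij.2 in
  fun k => if k == ij.1 then (vnorm w)^-1 *: w else U k.

(* Apply a sequence of interventions, first element first. *)
Definition run (R : realType) (n d : nat) (f : R -> R)
    (U : config R n d) (s : seq ('I_n * 'I_n)) : config R n d :=
  foldl (intervene f) U s.

Definition valid_interventions (n : nat) (s : seq ('I_n * 'I_n)) : bool :=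
  all (fun ij => ij.1 != ij.2) s.

Definition eps_active (R : realType) (n d : nat) (eps : R) (U : config R n d) : Prop :=
  exists i j : 'I_n, eps < `|gram U i j| < 1 - eps.

Definition eps_inactive (R : realType) (n d : nat) (eps : R) (U : config R n d) : Prop :=
  ~ eps_active eps U.

From HB Require Import structures.
From mathcomp Require Import all_boot all_order all_algebra.
From mathcomp Require Import all_classical all_reals all_analysis.
From mathcomp Require Import ring lra.
Import Order.TTheory GRing.Theory Num.Theory.
Import numFieldNormedType.Exports.
Set Implicit Arguments. Unset Strict Implicit. Unset Printing Implicit Defensive.
Local Open Scope ring_scope.

(* Call opinions i, j t-close (t = eps/2) when |A_ij| > t, and fix a maximal family
   C of pairwise non-close opinions; every other opinion i is t-close to some
   centre c(i) in C.  Intervening (i, c(i)) repeatedly never moves the centres,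
   and since |f| >= m > 0 on t <= |A| <= 1 (continuity and the sign condition),
   each intervention divides 1 - A_{i c(i)}^2 by at least 1 + m^2.  After a number
   N of rounds depending only on eps and f, every opinion lies within eps/4 of
   +/- its centre.  Then opinions with a common centre have |A| >= 1 - eps, and
   opinions with distinct centres have |A| <= eps/2 + 2 eps/4 = eps. *)

Section Dotp.
Variables (R : realType) (d : nat).
Implicit Types (u v w : 'rV[R]_d) (a : R).

Lemma dotpC u v : dotp u v = dotp v u.
Proof. by apply: eq_bigr => k _; rewrite mulrC. Qed.

Lemma dotpDl u v w : dotp (u + v) w = dotp u w + dotp v w.
Proof. by rewrite /dotp -big_split; apply: eq_bigr => k _; rewrite mxE mulrDl. Qed.

Lemma dotpZl a u w : dotp (a *: u) w = a * dotp u w.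
Proof. by rewrite /dotp mulr_sumr; apply: eq_bigr => k _; rewrite mxE mulrA. Qed.

Lemma dotpNl u w : dotp (- u) w = - dotp u w.
Proof. by rewrite -scaleN1r dotpZl mulN1r. Qed.

Lemma dotpDr u v w : dotp w (u + v) = dotp w u + dotp w v.
Proof. by rewrite dotpC dotpDl !(dotpC w). Qed.

Lemma dotpZr a u w : dotp w (a *: u) = a * dotp w u.
Proof. by rewrite dotpC dotpZl dotpC. Qed.

Lemma dotpNr u w : dotp w (- u) = - dotp w u.
Proof. by rewrite dotpC dotpNl dotpC. Qed.

Lemma dotpBZ u v a :
  dotp (u - a *: v) (u - a *: v) = dotp u u - 2 * a * dotp u v + a ^+ 2 * dotp v v.
Proof. by rewrite !(dotpDl, dotpDr, dotpNl, dotpNr, dotpZl, dotpZr) (dotpC v u); ring. Qed.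

Lemma dotpp_ge0 u : 0 <= dotp u u.
Proof. by apply: sumr_ge0 => k _; rewrite -expr2 sqr_ge0. Qed.

Lemma unit_vecP u : is_unit_vec u <-> dotp u u = 1.
Proof.
rewrite /is_unit_vec /vnorm; split => [h|->]; last exact: sqrtr1.
by rewrite -(sqr_sqrtr (dotpp_ge0 u)) h expr1n.
Qed.

Lemma norm_dotp_unit_le1 u v : dotp u u = 1 -> dotp v v = 1 -> `|dotp u v| <= 1.
Proof.
move=> hu hv; have := dotpp_ge0 (u - 1 *: v); have := dotpp_ge0 (u - (-1) *: v).
rewrite !dotpBZ hu hv ler_norml => ? ?; apply/andP; split; lra.
Qed.

Lemma sqr_dotp_unit_le1 u v : dotp u u = 1 -> dotp v v = 1 -> dotp u v ^+ 2 <= 1.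
Proof. by move=> hu hv; rewrite -real_normK ?num_real // expr_le1 ?norm_dotp_unit_le1. Qed.

(* Cauchy-Schwarz, from |e -/+ eta u|^2 >= 0. *)
Lemma norm_dotp_le u e eta :
  0 < eta -> dotp u u = 1 -> dotp e e <= eta ^+ 2 -> `|dotp e u| <= eta.
Proof.
move=> eta_gt0 hu hee.
have := dotpp_ge0 (e - eta *: u); have := dotpp_ge0 (e - (- eta) *: u).
rewrite !dotpBZ hu ler_norml => ? ?; apply/andP; split; nra.
Qed.

Lemma dist_norm_dotp_le (x y p q : 'rV[R]_d) (si sj eta : R) :
  dotp y y = 1 -> dotp p p = 1 -> `|si| = 1 -> `|sj| = 1 -> 0 < eta ->
  dotp (x - si *: p) (x - si *: p) <= eta ^+ 2 ->
  dotp (y - sj *: q) (y - sj *: q) <= eta ^+ 2 ->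
  `| `|dotp x y| - `|dotp p q| | <= 2 * eta.
Proof.
move=> hy hp hsi hsj eta_gt0 hx hy'.
have -> : `|dotp p q| = `|si * sj * dotp p q| by rewrite !normrM hsi hsj !mul1r.
apply: le_trans (ler_dist_dist _ _) _.
have -> : dotp x y - si * sj * dotp p q
    = dotp (x - si *: p) y + si * dotp p (y - sj *: q).
  by rewrite !(dotpDl, dotpDr, dotpNl, dotpNr, dotpZl, dotpZr); ring.
apply: le_trans (ler_normD _ _) _.
rewrite normrM hsi mul1r mulr_natl mulr2n lerD //; first exact: norm_dotp_le.
by rewrite dotpC; exact: norm_dotp_le.
Qed.

End Dotp.

Section Stable.
Variable R : realType.
Local Open Scope classical_set_scope.

Lemma continuous_neq0_norm_lbound (g : R -> R) (a b : R) :
  a <= b -> {within `[a, b], continuous g} -> {in `[a, b]%R, forall x, g x != 0} ->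
  exists2 c, 0 < c & {in `[a, b]%R, forall x, c <= `|g x|}.
Proof.
move=> le_ab g_cont g_neq0.
have normg_cont : {within `[a, b], continuous (fun x => `|g x|)}.
  by move=> x; apply: (continuous_comp (g_cont x)); exact: norm_continuous.
have [x0 x0_ab x0_min] := EVT_min le_ab normg_cont.
by exists `|g x0|; rewrite // normr_gt0 g_neq0.
Qed.

Variable f : R -> R.
Hypothesis f_stable : stable f.

Lemma stable_mul_ge0 (A : R) : `|A| <= 1 -> 0 <= f A * A.
Proof.
rewrite ler_norml => /f_stable.2 sg_fA.
by rewrite -sgr_ge0 sgrM sg_fA -expr2 sqr_ge0.
Qed.

Lemma stable_norm_lbound (t : R) : 0 < t -> t <= 1 ->
  exists2 c, 0 < c & forall A, t <= `|A| <= 1 -> c <= `|f A|.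
Proof.
move=> t_gt0 t_le1; have [f_cont f_sg] := f_stable.
have sub_itv (a b : R) : -1 <= a -> b <= 1 -> `[a, b] `<=` `[-1, 1].
  by move=> ha hb x /=; rewrite !in_itv /= => /andP[? ?]; apply/andP; split; lra.
have f_neq0 (a b : R) : 0 < a \/ b < 0 -> -1 <= a -> b <= 1 ->
    {in `[a, b]%R, forall x, f x != 0}.
  move=> ab0 ha hb x; rewrite in_itv /= => /andP[? ?].
  rewrite -sgr_eq0 f_sg ?sgr_eq0; [apply/negP => /eqP x0 | apply/andP; split]; lra.
have [c1 c1_gt0 hc1] : exists2 c, 0 < c & {in `[t, 1]%R, forall x, c <= `|f x|}.
  apply: continuous_neq0_norm_lbound; first exact: t_le1.
    by apply: continuous_subspaceW f_cont; apply: sub_itv; lra.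
  by apply: f_neq0; lra.
have [c2 c2_gt0 hc2] : exists2 c, 0 < c & {in `[-1, -t]%R, forall x, c <= `|f x|}.
  apply: continuous_neq0_norm_lbound; first lra.
    by apply: continuous_subspaceW f_cont; apply: sub_itv; lra.
  by apply: f_neq0; lra.
exists (Num.min c1 c2); first by rewrite lt_min c1_gt0.
move=> A /andP[tA A1]; case: (lerP 0 A) => A0.
- rewrite ge_min hc1 // in_itv /=; rewrite ger0_norm // in tA A1; lra.
- rewrite ge_min hc2 ?orbT // in_itv /=; rewrite ltr0_norm // in tA A1; lra.
Qed.

End Stable.

Section Pull.
Variables (R : realType) (d : nat) (f : R -> R).
Implicit Types (u v : 'rV[R]_d).

Definition pull v u : 'rV[R]_d :=
  let w := u + f (dotp u v) *: v in (vnorm w)^-1 *: w.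

(* Writing A = <u,v> and a = f A, the new inner product is (A + a)/|w| with
   |w|^2 = 1 + 2aA + a^2, so 1 - A^2 gets divided by |w|^2 >= 1 + a^2. *)
Lemma pull_gap u v : dotp u u = 1 -> dotp v v = 1 ->
  0 <= f (dotp u v) * dotp u v ->
  dotp (pull v u) (pull v u) = 1 /\
  (1 - dotp (pull v u) v ^+ 2) * (1 + f (dotp u v) ^+ 2) <= 1 - dotp u v ^+ 2.
Proof.
move=> hu hv; rewrite /pull; set A := dotp u v; set a := f A => aA_ge0.
set w := u + a *: v.
have ww : dotp w w = 1 + 2 * a * A + a ^+ 2.
  by rewrite !(dotpDl, dotpDr, dotpZl, dotpZr) hu hv (dotpC v u) -/A; ring.
have wv : dotp w v = A + a by rewrite dotpDl dotpZl hv mulr1.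
have ww_gt0 : 0 < dotp w w by rewrite ww; nra.
have s2 : (vnorm w)^-1 ^+ 2 * dotp w w = 1.
  by rewrite /vnorm exprVn sqr_sqrtr ?mulVf ?gt_eqF // ltW.
have A2_le1 : A ^+ 2 <= 1 by exact: sqr_dotp_unit_le1.
rewrite !(dotpZl, dotpZr) wv mulrA -expr2 s2; split=> //.
have -> : 1 - ((vnorm w)^-1 * (A + a)) ^+ 2 = (vnorm w)^-1 ^+ 2 * (1 - A ^+ 2).
  by rewrite -{1}s2 ww; ring.
rewrite ww in s2; set S := _ ^+ 2 in s2 *.
have S_ge0 : 0 <= S by exact: sqr_ge0.
by rewrite mulrAC ler_piMl ?subr_ge0 //; nra.
Qed.

Variables (t c : R).
Hypothesis t_gt0 : 0 < t.
Hypothesis c_ge0 : 0 <= c.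
Hypothesis f_lbound : forall A, t <= `|A| <= 1 -> c <= `|f A|.
Hypothesis f_mul_ge0 : forall A, `|A| <= 1 -> 0 <= f A * A.

Lemma iter_pull_gap u v m : dotp u u = 1 -> dotp v v = 1 -> t <= `|dotp u v| ->
  dotp (iter m (pull v) u) (iter m (pull v) u) = 1 /\
  t <= `|dotp (iter m (pull v) u) v| /\
  (1 - dotp (iter m (pull v) u) v ^+ 2) * (1 + m%:R * c ^+ 2) <= 1.
Proof.
move=> hu hv tA; elim: m => [|m [xx [tAm gap]]] /=.
  by rewrite mul0r addr0 mulr1 gerBl sqr_ge0.
set x := iter m (pull v) u in xx tAm gap *; set A := dotp x v in tAm gap *.
have A_le1 : `|A| <= 1 by exact: norm_dotp_unit_le1.
have [x'x' gap'] := pull_gap xx hv (f_mul_ge0 A_le1).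
rewrite -/A in gap'; set A' := dotp (pull v x) v in gap' *.
have c2_le : c ^+ 2 <= f A ^+ 2.
  by rewrite -(real_normK (num_real (f A))) ler_sqr ?nnegrE // f_lbound // tAm.
have A'_le1 : A' ^+ 2 <= 1 by exact: sqr_dotp_unit_le1.
have gapc : (1 - A' ^+ 2) * c ^+ 2 <= (1 - A' ^+ 2) * f A ^+ 2.
  by rewrite ler_wpM2l // subr_ge0.
have A_le_A' : A ^+ 2 <= A' ^+ 2 by nra.
split=> //; split.
  have : t ^+ 2 <= `|A'| ^+ 2.
    rewrite real_normK ?num_real //; apply: le_trans A_le_A'.
    by rewrite -(real_normK (num_real A)) ler_sqr ?nnegrE // ltW.
  by rewrite ler_sqr ?nnegrE // ltW.
have m_ge0 : 0 <= m%:R * c ^+ 2 :> R by rewrite mulr_ge0 ?sqr_ge0.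
rewrite -natr1 mulrDl mul1r; nra.
Qed.

Lemma iter_pull_close u v N eta :
  0 < eta -> dotp u u = 1 -> dotp v v = 1 -> t <= `|dotp u v| ->
  2 <= N%:R * (c * eta) ^+ 2 ->
  dotp (iter N (pull v) u) (iter N (pull v) u) = 1 /\
  exists2 s : R, `|s| = 1 &
    dotp (iter N (pull v) u - s *: v) (iter N (pull v) u - s *: v) <= eta ^+ 2.
Proof.
move=> eta_gt0 hu hv tA hN.
have [xx [_ gap]] := iter_pull_gap N hu hv tA.
set x := iter N (pull v) u in xx gap *; set A := dotp x v in gap.
split=> //.
have /andP[A_ge A_le] : -1 <= A <= 1 by rewrite -ler_norml norm_dotp_unit_le1.
set M := N%:R * c ^+ 2 in gap; rewrite exprMn mulrA -/M in hN.
have X_ge0 : 0 <= 1 - A ^+ 2 by nra.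
have M_ge0 : 0 <= M by rewrite mulr_ge0 ?sqr_ge0.
have XM_le1 : (1 - A ^+ 2) * M <= 1 by nra.
have : (1 - A ^+ 2) * 2 <= eta ^+ 2.
  have := ler_wpM2r (sqr_ge0 eta) XM_le1; have := ler_wpM2l X_ge0 hN.
  rewrite mul1r mulrA; exact: le_trans.
case: (lerP 0 A) => A_sgn.
- by exists 1; rewrite ?normr1 // dotpBZ xx hv -/A; nra.
- by exists (-1); rewrite ?normrN1 // dotpBZ xx hv -/A; nra.
Qed.

End Pull.

Section Run.
Variables (R : realType) (n d : nat) (f : R -> R).

Definition pull_schedule (ctr : 'I_n -> 'I_n) (N : nat) (ls : seq 'I_n) :=
  flatten [seq nseq N (y, ctr y) | y <- ls].

Lemma size_pull_schedule ctr N ls : size (pull_schedule ctr N ls) = (size ls * N)%N.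
Proof. by elim: ls => //= y ls IH; rewrite size_cat size_nseq IH mulSn. Qed.

Lemma run_nseq (U : config R n d) k c N : k != c ->
  run f U (nseq N (k, c)) =
  fun x => if x == k then iter N (pull f (U c)) (U k) else U x.
Proof.
move=> kc; elim: N U => [|N IH] U /=.
  by apply: funext => x; case: eqP => // ->.
rewrite /run /= -/(run f _ _) IH; apply: funext => x.
by rewrite /intervene /= eqxx [c == k]eq_sym (negbTE kc) -iterS iterSr; case: eqP.
Qed.

Lemma run_cat (U : config R n d) s1 s2 : run f U (s1 ++ s2) = run f (run f U s1) s2.
Proof. exact: foldl_cat. Qed.

Lemma run_pull_schedule (U : config R n d) ctr N ls x :
  uniq ls -> (forall y, ctr y \notin ls) ->
  run f U (pull_schedule ctr N ls) x =
    if x \in ls then iter N (pull f (U (ctr x))) (U x) else U x.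
Proof.
elim: ls U => [|a ls IH] U //= /andP[a_ls uniq_ls] ctr_out.
have ctr_a y : ctr y != a by apply: contraNneq (ctr_out y) => ->; exact: mem_head.
have ctr_ls y : ctr y \notin ls by apply: contra (ctr_out y); rewrite in_cons => ->; rewrite orbT.
rewrite /pull_schedule /= run_cat -/(pull_schedule ctr N ls) IH //.
rewrite run_nseq 1?eq_sym ?ctr_a // in_cons.
rewrite [a == _]eq_sym (negbTE (ctr_a x)); case: (eqVneq x a) => [->|xa] //=.
by rewrite (negbTE a_ls).
Qed.

End Run.

Lemma maximal_independent_retract (T : finType) (r : rel T) : symmetric r ->
  exists (C : {set T}) (ctr : T -> T),
    [/\ {in C &, forall a b, a != b -> ~~ r a b}, forall x, ctr x \in C,
        {in C, forall x, ctr x = x} & forall x, x \notin C -> r x (ctr x)].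
Proof.
move=> r_sym.
pose indep (C : {set T}) := [forall a in C, forall b in C, (a != b) ==> ~~ r a b].
have indepP (C : {set T}) : reflect {in C &, forall a b, a != b -> ~~ r a b} (indep C).
  apply: (iffP forall_inP) => [h a b aC bC ab | h a aC].
    by move/forall_inP: (h a aC) => /(_ b bC); rewrite ab.
  by apply/forall_inP => b bC; apply/implyP; exact: h.
have indep0 : indep finset.set0 by apply/indepP => a; rewrite inE.
case: (arg_maxnP (fun C : {set T} => #|C|) indep0) => C /indepP C_indep C_max.
have near_C x : x \notin C -> exists2 y, y \in C & r x y.
  move=> xC; case: (boolP [exists y in C, r x y]) => [/exists_inP //|/exists_inPn far].
  suff /C_max : indep (x |: C) by rewrite cardsU1 xC add1n /= ltnn.
  apply/indepP => a b; rewrite !in_setU1.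
  case/predU1P=> [->|aC] /predU1P[->|bC]; rewrite ?eqxx // => ab.
  - exact: far.
  - by rewrite r_sym; exact: far.
  - exact: C_indep.
have /fin_all_exists[ctr ctr_spec] : forall x, exists y,
    [/\ y \in C, x \in C -> y = x & x \notin C -> r x y].
  move=> x; case: (boolP (x \in C)) => xC; first by exists x.
  by have [y yC rxy] := near_C x xC; exists y.
by exists C, ctr; split=> // x; have [] := ctr_spec x; auto.
Qed.

Lemma exists_nat_ge_mul (R : realType) (a b : R) : 0 < a -> exists N : nat, b <= N%:R * a.
Proof.
by move=> a_gt0; exists (Num.truncn (b / a)).+1; rewrite -ler_pdivrMr // ltW ?truncnS_gt.
Qed.

Section Schedule.
Variables (R : realType) (n d : nat) (f : R -> R) (t c eta : R) (N : nat).
Hypotheses (t_gt0 : 0 < t) (c_ge0 : 0 <= c) (eta_gt0 : 0 < eta).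
Hypothesis N_large : 2 <= N%:R * (c * eta) ^+ 2.
Hypothesis f_lbound : forall A, t <= `|A| <= 1 -> c <= `|f A|.
Hypothesis f_mul_ge0 : forall A, `|A| <= 1 -> 0 <= f A * A.
Variables (U : config R n d) (C : {set 'I_n}) (ctr : 'I_n -> 'I_n).
Hypothesis U_unit : forall i, dotp (U i) (U i) = 1.
Hypothesis C_sep : {in C &, forall a b, a != b -> `|gram U a b| <= t}.
Hypothesis ctr_in : forall x, ctr x \in C.
Hypothesis ctr_id : {in C, forall x, ctr x = x}.
Hypothesis ctr_near : forall x, x \notin C -> t < `|gram U x (ctr x)|.

Local Notation W := (run f U (pull_schedule ctr N (enum (~: C)))).

Lemma pull_schedule_near x :
  dotp (W x) (W x) = 1 /\
  exists2 s : R, `|s| = 1 & dotp (W x - s *: U (ctr x)) (W x - s *: U (ctr x)) <= eta ^+ 2.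
Proof.
rewrite run_pull_schedule ?enum_uniq // => [|y]; last by rewrite mem_enum inE ctr_in.
rewrite mem_enum inE; case: (boolP (x \in C)) => xC /=.
  rewrite ctr_id //; split=> //; exists 1; rewrite ?normr1 // dotpBZ U_unit.
  by have := sqr_ge0 eta; lra.
by apply: (iter_pull_close t_gt0 c_ge0 f_lbound f_mul_ge0) => //; exact: ltW (ctr_near xC).
Qed.

Lemma pull_schedule_inactive (eps : R) : t + 2 * eta <= eps -> eps_inactive eps W.
Proof.
move=> eps_ge [i [j /andP[lo hi]]].
have [Wi [si si1 close_i]] := pull_schedule_near i.
have [Wj [sj sj1 close_j]] := pull_schedule_near j.
have := dist_norm_dotp_le Wj (U_unit (ctr i)) si1 sj1 eta_gt0 close_i close_j.
rewrite ler_distlC; have := t_gt0.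
case: (eqVneq (ctr i) (ctr j)) => [<-|ctr_ij].
  by rewrite U_unit normr1 => ? /andP[? ?]; lra.
by have := C_sep (ctr_in i) (ctr_in j) ctr_ij => ? ? /andP[? ?]; lra.
Qed.

End Schedule.

Theorem mainTheorem9 (R : realType) (d n : nat) (eps : R) (f : R -> R) :
  (2 <= d)%N -> (2 <= n)%N -> 0 < eps -> eps < 4^-1 -> stable f ->
  exists K : nat, (0 < K)%N /\
    forall U : config R n d, unit_config U -> eps_active eps U ->
      exists s : seq ('I_n * 'I_n),
        [/\ valid_interventions s, (size s <= K)%N & eps_inactive eps (run f U s)].
Proof.
move=> _ _ eps_gt0 eps_lt fs.
pose t := eps / 2; pose eta := eps / 4.
have t_gt0 : 0 < t by rewrite /t; lra.
have eta_gt0 : 0 < eta by rewrite /eta; lra.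
have t_le1 : t <= 1 by rewrite /t; lra.
have [c c_gt0 f_lbound] := stable_norm_lbound fs t_gt0 t_le1.
have [N N_large] := exists_nat_ge_mul 2 (exprn_gt0 2 (mulr_gt0 c_gt0 eta_gt0)).
exists (n * N).+1; split=> // U U_unit_vec _.
have U_unit i : dotp (U i) (U i) = 1 by apply/unit_vecP.
have r_sym : symmetric (fun i j => t < `|gram U i j|) by move=> i j; rewrite /gram dotpC.
have [C [ctr [C_indep ctr_in ctr_id ctr_near]]] := maximal_independent_retract r_sym.
exists (pull_schedule ctr N (enum (~: C))); split.
- apply/allP => _ /flattenP[_ /mapP[y + ->] /nseqP[-> _]] /=.
  by rewrite mem_enum inE; apply: contraNneq => ->.
- rewrite size_pull_schedule leqW // leq_mul // -cardE.
  by rewrite -[n in (_ <= n)%N]card_ord max_card.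
apply: (pull_schedule_inactive t_gt0 (ltW c_gt0) eta_gt0 N_large f_lbound) => //.
- exact: stable_mul_ge0.
- by move=> a b aC bC ab; rewrite leNgt C_indep.
- by rewrite /t /eta; lra.
Qed.
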